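(* For every abstract storage device $D$, $\sigma(D)\le i(D)\cdot C(D)$.
   Context: An abstract storage device (ASD) is a pair $D=(\mathcal{S}_D,\mathcal{P}_D)$, $\mathcal{S}_D$ a finite set and $\mathcal{P}_D$ a finite family of partitions of $\mathcal{S}_D$. For a partition $\pi$ of $\mathcal{S}'$ and $\phi:\mathcal{S}\to\mathcal{S}'$, $\pi\circ\phi$ is the partition of $\mathcal{S}$ with $x,y$ in the same block iff $\phi(x),\phi(y)$ are in the same block of $\pi$; $\pi\preceq\rho$ means every block of $\pi$ lies in a block of $\rho$; $\wedge$ is the meet of partitions. $D\le D'$ means there exist $\phi:\mathcal{S}_D\to\mathcal{S}_{D'}$, $\alpha:\mathcal{P}_D\to\mathcal{P}_{D'}$ with $\alpha(\pi)\circ\phi\preceq\pi$ for all $\pi\in\mathcal{P}_D$; $D\equiv D'$ means $D\le D'$ and $D'\le D$. $C_m$ is the ASD with state space $\{1,\dots,m\}$ and partition set $\{\{\{1\},\dots,\{m\}\}\}$. Storage capacity: $C(D)=\max\{\log m: C_m\le D\}$ (log base 2). State complexity: $\sigma(D)=\min_{E\equiv D}\log|\mathcal{S}_E|$. $D$ is perfect if $\{\{s\}:s\in\mathcal{S}_D\}\in\mathcal{P}_D$; $D^{(k)}$ has state space $\mathcal{S}_D$ and partition set $\{\pi_1\wedge\cdots\wedge\pi_k:\pi_i\in\mathcal{P}_D\}$; the perfectness index $i(D)$ is the least $k\ge1$ with $D^{(k)}$ perfect, or $\infty$ if none exists. *)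

From HB Require Import structures.
From mathcomp Require Import all_boot all_order all_algebra.
From mathcomp Require Import boolp reals ereal exp.
Set Implicit Arguments. Unset Strict Implicit. Unset Printing Implicit Defensive.
Import Order.TTheory GRing.Theory Num.Theory.

Record ASD := MkASD {
  states : finType;
  parts : {set {set {set states}}};
  parts_partition : forall pi, pi \in parts -> partition pi [set: states]
}.

Definition pullback (S S' : finType) (phi : S -> S') (pi : {set {set S'}})
  : {set {set S}} :=
  [set phi @^-1: B | B : {set S'} in pi & phi @^-1: B != set0].

Definition refines (S : finType) (pi rho : {set {set S}}) : bool :=
  [forall B in pi, [exists C in rho, B \subset C]].

Definition pmeet (S : finType) (pi rho : {set {set S}}) : {set {set S}} :=
  [set B :&: C | B : {set S} in pi, C : {set S} in rho & B :&: C != set0].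

Definition raw_le (S S' : finType) (P : {set {set {set S}}})
  (P' : {set {set {set S'}}}) : Prop :=
  exists (phi : S -> S') (alpha : {set {set S}} -> {set {set S'}}),
    forall pi, pi \in P -> alpha pi \in P' /\ refines (pullback phi (alpha pi)) pi.

Definition asd_le (D D' : ASD) : Prop := raw_le (parts D) (parts D').
Definition asd_equiv (D D' : ASD) : Prop := asd_le D D' /\ asd_le D' D.

Definition discrete (S : finType) : {set {set S}} := [set [set s] | s : S].

(* C_m: state space {1..m} (here 'I_m), single partition into singletons. *)
Definition Cm_parts (m : nat) : {set {set {set 'I_m}}} := [set discrete 'I_m].

Definition Cm_le (m : nat) (D : ASD) : Prop := raw_le (Cm_parts m) (parts D).

(* m is the maximal m >= 1 with C_m <= D, so that C(D) = log2 m. *)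
Definition is_capacity_max (D : ASD) (m : nat) : Prop :=
  (0 < m)%N /\ Cm_le m D /\ (forall m', (0 < m')%N -> Cm_le m' D -> (m' <= m)%N).

Section Reals.
Variable R : realType.

Definition log2 (x : R) : R := ln x / ln 2.

(* (n+1)-fold meets: kmeets P n = {pi_1 /\ ... /\ pi_{n+1} : pi_i in P} *)
Fixpoint kmeets (S : finType) (P : {set {set {set S}}}) (n : nat)
  : {set {set {set S}}} :=
  match n with
  | 0 => P
  | n'.+1 => [set pmeet pi rho | pi : {set {set S}} in kmeets P n', rho : {set {set S}} in P]
  end.

Definition kperfect (D : ASD) (k : nat) : bool :=
  (0 < k)%N && (discrete (states D) \in kmeets (parts D) k.-1).

Definition perf_index (D : ASD) : \bar R :=
  match pselect (exists k, kperfect D k) with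
  | left h => ((ex_minn h)%:R)%:E
  | right _ => +oo%E
  end.

Definition equiv_card (D : ASD) : pred nat :=
  fun n => `[< exists E : ASD, asd_equiv E D /\ #|states E| = n >].

Definition state_complexity (D : ASD) : R :=
  match pselect (exists n, equiv_card D n) with
  | left h => log2 (ex_minn h)%:R
  | right _ => 0 (* never happens: D is equivalent to itself *)
  end.

End Reals.

From HB Require Import structures.
From mathcomp Require Import all_boot all_order all_algebra.
From mathcomp Require Import boolp reals ereal exp.
Set Implicit Arguments. Unset Strict Implicit. Unset Printing Implicit Defensive.
Import Order.TTheory GRing.Theory Num.Theory.

(* A k-fold meet of partitions with at most m blocks each has at most m^k
   blocks, so a perfect D^(k) has at most m^k states, where m = 2^C(D) bounds
   the number of blocks of every partition of D: choosing one representative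
   state per block of a partition pi embeds C_{|pi|} into D.  Hence
   sigma(D) <= log |S_D| <= k log m.  When no D^(k) is perfect the bound is
   +oo, unless m = 1; then every partition is trivial and D is equivalent to
   a one-state device, so sigma(D) = 0. *)

Lemma card_pmeet_le (S : finType) (pi rho : {set {set S}}) :
  (#|pmeet pi rho| <= #|pi| * #|rho|)%N.
Proof.
rewrite -cardsX.
apply: leq_trans (leq_imset_card (fun p : {set S} * {set S} => p.1 :&: p.2) _).
apply/subset_leq_card/subsetP => X /imset2P [B C HB].
rewrite inE => /andP [HC _] ->.
by apply/imsetP; exists (B, C); rewrite // inE HB HC.
Qed.

Lemma card_kmeets_le (S : finType) (P : {set {set {set S}}}) m n pi :
  (forall rho, rho \in P -> #|rho| <= m)%N ->
  pi \in kmeets P n -> (#|pi| <= m ^ n.+1)%N.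
Proof.
move=> leP; elim: n pi => [|n IHn] pi /=; first by rewrite expn1; apply: leP.
case/imset2P=> [sigma rho Hsigma Hrho ->].
by rewrite (leq_trans (card_pmeet_le _ _)) // expnS mulnC leq_mul ?leP ?IHn.
Qed.

Lemma card_discrete (S : finType) : #|discrete S| = #|S|.
Proof. by rewrite card_imset //; apply: set1_inj. Qed.

Lemma card_states_le_kperfect (D : ASD) m k :
  (forall pi, pi \in parts D -> #|pi| <= m)%N ->
  kperfect D k -> (#|states D| <= m ^ k)%N.
Proof.
move=> leD /andP [k_gt0 Dk_perfect].
by rewrite -card_discrete -(prednK k_gt0) (card_kmeets_le leD Dk_perfect).
Qed.

Lemma Cm_le_card_partition (D : ASD) (s0 : states D) pi :
  pi \in parts D -> Cm_le #|pi| D.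
Proof.
move=> Dpi; have /and3P [_ triv_pi set0_pi] := parts_partition Dpi.
pose rep (i : 'I_#|pi|) : states D := odflt s0 [pick x in enum_val i].
have rep_block (i : 'I_#|pi|) : rep i \in enum_val i.
  rewrite /rep; case: pickP => [//|no_pick].
  have /set0Pn [x Hx] : enum_val i != set0.
    by apply: contraNneq set0_pi => <-; apply: enum_valP.
  by have := no_pick x; rewrite Hx.
have rep_inj_block B (i : 'I_#|pi|) : B \in pi -> rep i \in B -> enum_val i = B.
  move=> piB Bi.
  by rewrite -(def_pblock triv_pi (enum_valP i) (rep_block i)) (def_pblock triv_pi piB Bi).
exists rep, (fun=> pi) => _ /set1P ->; split=> //.
apply/forallP => X; apply/implyP => /imsetP [B]; rewrite inE.
case/andP=> [piB /set0Pn [i Bi]] ->.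
apply/existsP; exists [set i]; rewrite imset_f //=.
apply/subsetP => j Bj; rewrite !inE in Bi Bj *.
by apply/eqP/enum_val_inj; rewrite (rep_inj_block B i) ?(rep_inj_block B j).
Qed.

Lemma card_parts_le_capacity (D : ASD) m pi :
  is_capacity_max D m -> pi \in parts D -> (#|pi| <= m)%N.
Proof.
move=> [_ [_ maxm]] Dpi; have [->//|pi_gt0] := posnP #|pi|.
have [B piB] := card_gt0P pi_gt0.
have /set0Pn [s0 _] : B != set0.
  by have /and3P [_ _ set0_pi] := parts_partition Dpi; apply: contraNneq set0_pi => <-.
exact: maxm pi_gt0 (Cm_le_card_partition s0 Dpi).
Qed.

Lemma asd_equiv_refl (D : ASD) : asd_equiv D D.
Proof.
suff leDD : asd_le D D by split.
exists id, id => pi Dpi; split=> //.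
apply/forallP => X; apply/implyP => /imsetP [B]; rewrite inE => /andP [piB _] ->.
by apply/existsP; exists B; rewrite piB; apply/subsetP => x; rewrite inE.
Qed.

Section StateComplexity.
Variable R : realType.
Local Open Scope ring_scope.

Lemma log2_gt0 (x : R) : 1 < x -> 0 < log2 x.
Proof. by move=> x_gt1; rewrite divr_gt0 ?ln_gt0 ?ltr1n. Qed.

Lemma ler_log2 (x y : R) : 0 < x -> x <= y -> log2 x <= log2 y.
Proof.
move=> x_gt0 le_xy; rewrite ler_pM2r ?invr_gt0 ?ln_gt0 ?ltr1n //.
by rewrite ler_ln ?posrE // (lt_le_trans x_gt0).
Qed.

Lemma log2X (x : R) n : 0 < x -> log2 (x ^+ n) = n%:R * log2 x.
Proof. by move=> x_gt0; rewrite /log2 lnXn // mulr_natl mulrnAl. Qed.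

Lemma state_complexity_le (D E : ASD) :
  asd_equiv E D -> (0 < #|states E|)%N ->
  state_complexity R D <= log2 #|states E|%:R.
Proof.
move=> ED E_gt0; rewrite /state_complexity.
case: pselect => [h|[]]; last by exists #|states E|; apply/asboolP; exists E.
case: ex_minnP => n _ /(_ #|states E|) le_n.
have {}le_n : (n <= #|states E|)%N by apply/le_n/asboolP; exists E.
have [->|n_gt0] := posnP n; last by rewrite ler_log2 ?ler_nat ?ltr0n.
by rewrite /log2 ln0 // mul0r divr_ge0 ?ln_ge0 ?ler1n.
Qed.

End StateComplexity.

(* The one-point device has a partition only if D has one: every partition of
   it must be sent by alpha to a partition of D. *)
Definition point_parts (D : ASD) : {set {set {set unit}}} :=
  if parts D == set0 then set0 else [set [set setT]].

Lemma point_parts_partition (D : ASD) pi :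
  pi \in point_parts D -> partition pi [set: unit].
Proof.
rewrite /point_parts; case: ifP => _; first by rewrite inE.
move/set1P ->; apply/and3P; split; first by rewrite cover1.
  exact: trivIset1.
by rewrite inE eq_sym; apply/set0Pn; exists tt.
Qed.

Definition point_device (D : ASD) : ASD :=
  MkASD (@point_parts_partition D).

Lemma point_device_equiv (D : ASD) (s0 : states D) :
  (forall pi, pi \in parts D -> #|pi| <= 1)%N -> asd_equiv (point_device D) D.
Proof.
move=> le1D; split.
  exists (fun=> s0), (fun=> odflt set0 [pick pi in parts D]) => pi.
  rewrite /= /point_parts; case: ifPn => [_|/set0Pn [rho Drho]]; first by rewrite inE.
  move/set1P ->; split.
    by case: pickP => [//|no_pick]; have := no_pick rho; rewrite Drho.
  apply/forallP => X; apply/implyP => _; apply/existsP; exists setT.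
  by rewrite inE eqxx subsetT.
exists (fun=> tt), (fun=> [set setT]) => pi Dpi; split.
  rewrite /= /point_parts; case: ifPn => [/eqP D0|_]; last by rewrite inE.
  by rewrite D0 inE in Dpi.
have /and3P [/eqP cover_pi _ _] := parts_partition Dpi.
have block x : exists2 C, C \in pi & x \in C.
  by apply/bigcupP; rewrite -/(cover pi) cover_pi inE.
have [C piC _] := block s0.
apply/forallP => X; apply/implyP => _; apply/existsP; exists C.
rewrite piC; apply/subsetP => x _; have [C' piC' xC'] := block x.
by rewrite (card_le1_eqP (le1D _ Dpi) C' C piC' piC).
Qed.

Theorem proposition5 (R : realType) (D : ASD) (m : nat) :
  is_capacity_max D m ->
  ((state_complexity R D)%:E <= perf_index R D * (log2 (m%:R : R))%:E)%E.
Proof.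
move=> capD; have leD := card_parts_le_capacity capD.
have [m_gt0 [[phi _] _]] := capD; pose s0 := phi (Ordinal m_gt0).
have states_gt0 : (0 < #|states D|)%N by apply/card_gt0P; exists s0.
rewrite /perf_index; case: pselect => [h|_].
  case: ex_minnP => k Dk _; rewrite -EFinM lee_fin.
  apply: le_trans (state_complexity_le R (asd_equiv_refl D) states_gt0) _.
  by rewrite -log2X ?ltr0n // ler_log2 ?ltr0n // -natrX ler_nat card_states_le_kperfect.
have [m_lt1|m_gt1|m1] := ltngtP m 1.
- by move: m_lt1; rewrite ltnNge m_gt0.
- by rewrite gt0_mulye ?leey // lte_fin log2_gt0 ?ltr1n.
rewrite m1 /log2 ln1 mul0r mule0 lee_fin.
have le1D pi : pi \in parts D -> (#|pi| <= 1)%N by rewrite -m1; apply: leD.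
apply: le_trans (state_complexity_le R (point_device_equiv s0 le1D) _) _.
  by rewrite card_unit.
by rewrite card_unit /log2 ln1 mul0r.
Qed.
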